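(* Let $G=(V,E)$ be a finite simple graph of order $n$ and let $T=n-1$. If $(x,y,z)$ is an optimal solution of the integer program with the constraints of the Time Step Model $\mathrm{TSM}(G,T)$ and objective ''minimize $\sum_{v\in V}x^0_v+\sum_{t\in[T]}z^t$'', then $C=\{v\in V\colon x^0_v=1\}$ is a zero forcing set of $G$ with $\mathrm{th}(G)=\mathrm{th}(G,C)=\sum_{v\in V}x^0_v+\sum_{t\in[T]}z^t$.
   Context: Zero forcing: under the standard color change rule a filled vertex $u$ can force a non-filled vertex $v$ if $v$ is the only non-filled neighbor of $u$; $C\subseteq V$ is a zero forcing set if, starting with $C$ filled and repeatedly forcing, all of $V$ becomes filled. The propagation time $\mathrm{pt}(G,C)$ is the smallest $t^*$ such that, starting from $C^{[0]}=C$ and setting $C^{[t]}=C^{[t-1]}\cup\{v\notin C^{[t-1]}\colon$ some $u\in C^{[t-1]}$ has $v$ as its only neighbor outside $C^{[t-1]}\}$, one has $C^{[t^*]}=V$ ($\infty$ if $C$ is not a zero forcing set). $\mathrm{th}(G,C)=|C|+\mathrm{pt}(G,C)$ and $\mathrm{th}(G)=\min_{C\subseteq V}\mathrm{th}(G,C)$. $N(u)$ is the neighborhood of $u$ and $d(u)=|N(u)|$. Time Step Model constraints: $A$ is the set of arcs containing $(u,v)$ and $(v,u)$ for each edge $\{u,v\}$, $[T]=\{1,\dots,T\}$. Binary variables $x^t_v$ ($v\in V$, $t\in\{0,\dots,T\}$), $y^t_a$ ($a\in A$, $t\in[T]$), $z^t$ ($t\in[T]$), with constraints: (1) $x^0_v+\sum_{t\in[T]}\sum_{a=(u,v)\in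 A}y^t_a=1$ for all $v$; (2) $y^t_a\leq x^{t-1}_u$ for all $a=(u,v)\in A$, $t\in[T]$; (3) $y^t_a\leq x^{t-1}_w$ for all $a=(u,v)\in A$, $w\in N(u)\setminus\{v\}$, $t\in[T]$; (4) $x^t_v=x^{t-1}_v+\sum_{a=(u,v)\in A}y^t_a$ for all $v$, $t\in[T]$; (5) $x^{t-1}_u-x^{t-1}_v+\sum_{w\in N(u)\setminus\{v\}}x^{t-1}_w\leq\sum_{a=(w,v)\in A}y^t_a+d(u)-1$ for all $(u,v)\in A$, $t\in[T]$; (6) $\frac1n\sum_{v\in V}(x^t_v-x^{t-1}_v)-z^t\leq0$ for all $t\in[T]$; (7) $z^t-\sum_{v\in V}(x^t_v-x^{t-1}_v)\leq 0$ for all $t\in[T]$. *)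

From mathcomp Require Import all_boot all_order all_algebra.
Set Implicit Arguments. Unset Strict Implicit. Unset Printing Implicit Defensive.
Import Order.TTheory GRing.Theory Num.Theory.

(* A finite simple graph: vertex type V : finType, adjacency e : rel V,
   assumed symmetric and irreflexive (hypotheses of the theorem).
   N(u) = [set w | e u w], d(u) = #|N(u)|. *)

Section ZeroForcing.
Variables (V : finType) (e : rel V).

Definition nbhd (u : V) : {set V} := [set w | e u w].
Definition deg (u : V) : nat := #|nbhd u|.

Definition can_force (C : {set V}) (u v : V) : bool :=
  [&& u \in C, v \notin C, e u v &
      [forall w, (e u w && (w \notin C)) ==> (w == v)]].

Definition zf_step (C : {set V}) : {set V} :=
  C :|: [set v | [exists u, can_force C u v]].

Definition zf_iter (t : nat) (C : {set V}) : {set V} := iter t zf_step C.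

Definition zero_forcing_set (C : {set V}) : Prop :=
  exists t, zf_iter t C = setT.

(* pt(G,C) = t  (only defined when finite; otherwise pt = infinity) *)
Definition pt_is (C : {set V}) (t : nat) : Prop :=
  zf_iter t C = setT /\ forall s, (s < t)%N -> zf_iter s C != setT.

(* th(G,C) = k, for a finite value k (th(G,C) = infinity is never "= k") *)
Definition thC_is (C : {set V}) (k : nat) : Prop :=
  exists t, pt_is C t /\ k = (#|C| + t)%N.

Definition th_is (k : nat) : Prop :=
  (exists C, thC_is C k) /\ forall C k', thC_is C k' -> (k <= k')%N.

End ZeroForcing.

Local Open Scope ring_scope.

Definition b2q (b : bool) : rat := (b : nat)%:R.

Section TSM.
Variables (V : finType) (e : rel V) (T : nat).
(* Variables: x t v (t in 0..T), y t u v for the arc (u,v) (t in 1..T,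
   used only when e u v), z t (t in 1..T); all binary (bool). *)
Variables (x : nat -> V -> bool) (y : nat -> V -> V -> bool) (z : nat -> bool).

Definition inflow (t : nat) (v : V) : rat := \sum_(u | e u v) b2q (y t u v).

Definition tsm_feasible : Prop :=
  (forall v, b2q (x 0%N v) + \sum_(1 <= t < T.+1) inflow t v = 1) /\
  (forall t u v, (1 <= t <= T)%N -> e u v -> b2q (y t u v) <= b2q (x t.-1 u)) /\
  (forall t u v w, (1 <= t <= T)%N -> e u v -> e u w -> w != v ->
      b2q (y t u v) <= b2q (x t.-1 w)) /\
  (forall t v, (1 <= t <= T)%N -> b2q (x t v) = b2q (x t.-1 v) + inflow t v) /\
  (forall t u v, (1 <= t <= T)%N -> e u v ->
      b2q (x t.-1 u) - b2q (x t.-1 v) + \sum_(w | e u w && (w != v)) b2q (x t.-1 w)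
      <= inflow t v + (deg e u)%:R - 1) /\
  (forall t, (1 <= t <= T)%N ->
      (#|V|%:R)^-1 * \sum_(v : V) (b2q (x t v) - b2q (x t.-1 v)) - b2q (z t) <= 0) /\
  (forall t, (1 <= t <= T)%N ->
      b2q (z t) - \sum_(v : V) (b2q (x t v) - b2q (x t.-1 v)) <= 0).

Definition tsm_objective : rat :=
  \sum_(v : V) b2q (x 0%N v) + \sum_(1 <= t < T.+1) b2q (z t).

End TSM.

Definition tsm_optimal (V : finType) (e : rel V) (T : nat)
  (x : nat -> V -> bool) (y : nat -> V -> V -> bool) (z : nat -> bool) : Prop :=
  tsm_feasible e T x y z /\
  forall x' y' z', tsm_feasible e T x' y' z' ->
    tsm_objective T x z <= tsm_objective T x' z'.

From mathcomp Require Import all_boot all_order all_algebra.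
From mathcomp Require Import zify lra.
Import Order.TTheory GRing.Theory Num.Theory.
Local Open Scope ring_scope.
Set Implicit Arguments. Unset Strict Implicit.

(* A feasible solution of TSM(G,T) is exactly the run of the forcing process
   from C = {v | x^0_v = 1}: x^t is the filled set C^[t], y records one forcer
   of each newly filled vertex, and constraints (6)-(7) force z^t = 1 exactly
   in the rounds where C^[t] grows.  Its objective is therefore
   |C| + pt(G,C) as soon as pt(G,C) <= T.  Conversely every C with finite
   propagation time yields such a solution, and pt(G,C) <= n - 1, so with
   T = n - 1 minimising the objective is minimising th(G,C). *)

Lemma b2q_ge0 b : 0 <= b2q b. Proof. by case: b. Qed.

Lemma b2q_eq1 b : (b2q b == 1) = b.
Proof. by case: b; rewrite /b2q /= ?eqxx // eq_sym oner_eq0. Qed.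

Lemma b2q_le b b' : (b2q b <= b2q b') = (b ==> b').
Proof. by case: b; case: b'; rewrite /b2q /= ?lexx ?ler01 ?ler10. Qed.

Lemma b2q_addE b b' (r : rat) : 0 <= r -> b2q b' = b2q b + r -> b' = b || (0 < r).
Proof. by case: b; case: b'; rewrite /b2q /=; lra. Qed.

Lemma b2q_pos_indicatorP (n k : nat) b : (k <= n)%N ->
  (n%:R^-1 * k%:R - b2q b <= 0 /\ b2q b - k%:R <= 0 :> rat) <-> b = (0 < k)%N.
Proof.
case: b; case: k => [|k] kn; split => //=; rewrite /b2q /=.
- by case=> _; rewrite subr0 ler10.
- move=> _; have n_gt0 : (0 < n)%N by lia.
  rewrite subr_le0 ler_pdivrMl ?ltr0n // mulr1 ler_nat kn; split => //.
  by rewrite subr_le0 ler1n.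
- by rewrite mulr0 !subrr.
- case=> + _; rewrite subr0 pmulr_rle0 ?ler0n ?invr_gt0 ?ltr0n ?lern0 //; lia.
Qed.

Section Counting.
Variable V : finType.

Lemma sum_b2q_setI (A X : {set V}) : \sum_(w in A) b2q (w \in X) = #|A :&: X|%:R.
Proof.
rewrite -sum1_card natr_sum big_mkcond [RHS]big_mkcond /=.
by apply: eq_bigr => w _; rewrite inE; case: (w \in A); case: (w \in X).
Qed.

Lemma sum_b2q_card (X : {set V}) : \sum_w b2q (w \in X) = #|X|%:R.
Proof. by rewrite -[X in RHS]setTI -sum_b2q_setI; apply: eq_bigl => w; rewrite inE. Qed.

Lemma sum_b2q_subset (A B : {set V}) : A \subset B ->
  \sum_w (b2q (w \in B) - b2q (w \in A)) = (#|B| - #|A|)%N%:R.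
Proof. by move=> /subset_leq_card AB; rewrite sumrB !sum_b2q_card natrB. Qed.

Lemma subn_cards_gt0 (A B : {set V}) : A \subset B -> (0 < #|B| - #|A|)%N = (B != A).
Proof. by move=> AB; rewrite subn_gt0 -[LHS]andTb -AB -properEcard properEneq eq_sym AB andbT. Qed.

Lemma growth_constraintsP (A B : {set V}) b : A \subset B ->
  let gain := \sum_w (b2q (w \in B) - b2q (w \in A)) in
  (#|V|%:R^-1 * gain - b2q b <= 0 /\ b2q b - gain <= 0) <-> b = (B != A).
Proof.
move=> AB; rewrite /= sum_b2q_subset // -subn_cards_gt0 //.
exact/b2q_pos_indicatorP/(leq_trans (leq_subr _ _) (max_card _)).
Qed.

End Counting.

Section ZeroForcing.
Variables (V : finType) (e : rel V).

Lemma zf_step_sub (X : {set V}) : X \subset zf_step e X.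
Proof. exact: subsetUl. Qed.

Lemma zf_stepE (X : {set V}) v : (v \in zf_step e X) = (v \in X) || [exists u, can_force e X u v].
Proof. by rewrite !inE. Qed.

Lemma can_forceE (X : {set V}) u v :
  can_force e X u v = [&& u \in X, v \notin X, e u v & nbhd e u :\ v \subset X].
Proof.
rewrite /can_force; congr [&& _, _, _ & _]; apply/forallP/subsetP => [H w | H w].
  rewrite !inE => /andP [wv uw]; apply/negPn/negP => wX.
  by have := H w; rewrite uw wX /= (negbTE wv).
apply/implyP => /andP [uw wX]; apply/negPn/negP => wv.
by have := H w; rewrite !inE wv uw (negbTE wX) => /(_ isT).
Qed.

Lemma can_force_notin (X : {set V}) u v : can_force e X u v -> v \notin X.
Proof. by case/and4P. Qed.

Lemma deg_nbhdD1 u v : e u v -> deg e u = #|nbhd e u :\ v|.+1.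
Proof. by move=> uv; rewrite /deg (cardsD1 v) inE uv. Qed.

Lemma zf_iterD s t (X : {set V}) : zf_iter e (s + t) X = zf_iter e s (zf_iter e t X).
Proof. exact: iterD. Qed.

Lemma zf_iterS t (X : {set V}) : zf_iter e t.+1 X = zf_step e (zf_iter e t X).
Proof. by []. Qed.

Lemma zf_iter_fixed (X : {set V}) t : zf_step e X = X -> zf_iter e t X = X.
Proof. by move=> fixX; elim: t => //= t ->. Qed.

Lemma zf_stepT : zf_step e setT = setT.
Proof. by apply/eqP; rewrite eqEsubset subsetT zf_step_sub. Qed.

Lemma zf_step0 : zf_step e set0 = set0.
Proof. by apply/setP => v; rewrite zf_stepE inE; apply/existsP => [[u]] /and4P []; rewrite inE. Qed.

Lemma pt_zf_iter_ge (C : {set V}) p s : pt_is e C p -> (p <= s)%N -> zf_iter e s C = setT.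
Proof. by case=> Cp _ /subnK <-; rewrite zf_iterD Cp zf_iter_fixed // zf_stepT. Qed.

Lemma pt_zf_iter_proper (C : {set V}) p s : pt_is e C p -> (s < p)%N ->
  zf_iter e s C \proper zf_iter e s.+1 C.
Proof.
case=> Cp Cpmin sp; rewrite zf_iterS properEneq zf_step_sub andbT eq_sym.
apply: (contraNneq _ (Cpmin s sp)) => fixs; apply/eqP.
by rewrite -Cp -(subnK (ltnW sp)) zf_iterD (zf_iter_fixed _ fixs).
Qed.

Lemma pt_card (C : {set V}) p : pt_is e C p -> (#|C| + p <= #|V|)%N.
Proof.
move=> Cp; apply: leq_trans (max_card (zf_iter e p C)).
have grow s : (s <= p)%N -> (#|C| + s <= #|zf_iter e s C|)%N.
  elim: s => [|s IH] sp; first by rewrite addn0.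
  by rewrite addnS; apply: leq_ltn_trans (IH (ltnW sp)) (proper_card (pt_zf_iter_proper Cp sp)).
exact: grow.
Qed.

Lemma pt_le_card_pred (C : {set V}) p : pt_is e C p -> (p <= #|V|.-1)%N.
Proof.
move=> Cp; have := pt_card Cp; have [C0 | ] := eqVneq C set0; last by rewrite -card_gt0; lia.
have [+ _] := Cp; rewrite C0 zf_iter_fixed ?zf_step0 // => /(congr1 (fun X : {set V} => #|X|)).
by rewrite cards0 cardsT => <-; lia.
Qed.

Lemma pt_exists (C : {set V}) t : zf_iter e t C = setT -> exists2 p, pt_is e C p & (p <= t)%N.
Proof.
move=> Ct; have exC : exists t, zf_iter e t C == setT by exists t; rewrite Ct.
case: (ex_minnP exC) => p /eqP Cp pmin; exists p; last by rewrite pmin ?Ct.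
by split=> // s; apply: contraTN => /pmin; rewrite -leqNgt.
Qed.

Definition zf_rounds T (C : {set V}) : nat :=
  \sum_(1 <= t < T.+1) (zf_iter e t C != zf_iter e t.-1 C).

Lemma zf_rounds_pt T (C : {set V}) p : pt_is e C p -> (p <= T)%N -> zf_rounds T C = p.
Proof.
move=> Cp pT; rewrite /zf_rounds (@big_cat_nat _ _ _ p.+1) //=.
rewrite big_nat_cond (eq_bigr (fun _ => 1%N)) -?big_nat_cond; last first.
  case=> [|t] /andP [/andP [_ tp] _] //; rewrite eq_sym.
  by have := pt_zf_iter_proper Cp tp; rewrite properEneq => /andP [-> _].
rewrite sum_nat_const_nat muln1 subn1 /= big_nat big1 ?addn0 // => [[|t]] // /andP [pt _].
by rewrite !(pt_zf_iter_ge Cp) ?eqxx //; lia.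
Qed.

End ZeroForcing.

Lemma sum_nbhdD1 (V : finType) (e : rel V) (f : V -> rat) u v :
  \sum_(w | e u w && (w != v)) f w = \sum_(w in nbhd e u :\ v) f w.
Proof. by apply: eq_bigl => w; rewrite !inE andbC. Qed.

Lemma inflow_ge0 (V : finType) (e : rel V) y t v : 0 <= inflow e y t v.
Proof. by apply: sumr_ge0 => u _; apply: b2q_ge0. Qed.

Lemma x_telescope (V : finType) (e : rel V) T (x : nat -> V -> bool) y v :
  (forall t, (1 <= t <= T)%N -> b2q (x t v) = b2q (x t.-1 v) + inflow e y t v) ->
  forall t, (t <= T)%N -> b2q (x t v) = b2q (x 0%N v) + \sum_(1 <= s < t.+1) inflow e y s v.
Proof.
move=> step; elim=> [|t IH] tT; first by rewrite big_geq // addr0.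
by rewrite big_nat_recr //= step ?IH ?addrA //; lia.
Qed.

Section ForcingSolution.
Variables (V : finType) (e : rel V) (T : nat) (C : {set V}).

Definition forcing_x t v := v \in zf_iter e t C.
Definition forcing_y t u v := [pick w | can_force e (zf_iter e t.-1 C) w v] == Some u.
Definition forcing_z t := zf_iter e t C != zf_iter e t.-1 C.

Lemma forcing_y_can_force t u v : forcing_y t u v -> can_force e (zf_iter e t.-1 C) u v.
Proof. by rewrite /forcing_y; case: pickP => // w Hw /eqP [<-]. Qed.

Lemma inflow_forcing t v :
  inflow e forcing_y t v = b2q [exists u, can_force e (zf_iter e t.-1 C) u v].
Proof.
rewrite /inflow /forcing_y; case: pickP => [w wv | noforce]; last first.
  have /negbTE -> : ~~ [exists u, can_force e (zf_iter e t.-1 C) u v].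
    by apply/existsP => [[u]]; rewrite noforce.
  by rewrite big1.
have -> : [exists u, can_force e (zf_iter e t.-1 C) u v] by apply/existsP; exists w.
have [_ _ ew _] := and4P wv; rewrite (bigD1 w) //= eqxx big1 ?addr0 //.
by move=> u /andP [_ uw]; rewrite eq_sym (inj_eq Some_inj) (negbTE uw).
Qed.

Lemma forcing_x_step t v : (1 <= t)%N ->
  b2q (forcing_x t v) = b2q (forcing_x t.-1 v) + inflow e forcing_y t v.
Proof.
case: t => // s _; rewrite inflow_forcing /forcing_x /= zf_stepE.
case: (boolP (v \in zf_iter e s C)) => [vX | _]; last by rewrite add0r.
have /negbTE -> // : ~~ [exists u, can_force e (zf_iter e s C) u v].
by apply/existsP => [[u /can_force_notin]]; rewrite vX.
Qed.

Lemma forcing_constraint5 (X : {set V}) u v : e u v ->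
  b2q (u \in X) - b2q (v \in X) + \sum_(w | e u w && (w != v)) b2q (w \in X)
  <= b2q [exists w, can_force e X w v] + (deg e u)%:R - 1.
Proof.
move=> uv; rewrite sum_nbhdD1 sum_b2q_setI (deg_nbhdD1 uv) -addn1 natrD addrA addrK.
set A := nbhd e u :\ v.
have AX : #|A :&: X|%:R <= #|A|%:R :> rat by rewrite ler_nat subset_leq_card ?subsetIl.
case: (boolP [exists w, _]) => [_ | noforce].
  by case: (u \in X); case: (v \in X); rewrite /b2q /=; lra.
case uX: (u \in X); last by case: (v \in X); rewrite /b2q /=; lra.
case vX: (v \in X); first by rewrite /b2q /=; lra.
have notAX : ~~ (A \subset X).
  by apply: contra noforce => AX'; apply/existsP; exists u; rewrite can_forceE uX vX uv.
have := proper_card (properIl notAX); rewrite -(ler_nat rat) -addn1 natrD /b2q /=; lra.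
Qed.

Lemma forcing_feasible : zf_iter e T C = setT -> tsm_feasible e T forcing_x forcing_y forcing_z.
Proof.
move=> CT; have step t v (tT : (1 <= t <= T)%N) := forcing_x_step v (proj1 (andP tT)).
have growth t : (1 <= t)%N ->
    let gain := \sum_v (b2q (forcing_x t v) - b2q (forcing_x t.-1 v)) in
    #|V|%:R^-1 * gain - b2q (forcing_z t) <= 0 /\ b2q (forcing_z t) - gain <= 0.
  by case: t => // t _; apply/(growth_constraintsP _ (zf_step_sub _ _)).
split.
  move=> v; rewrite -(x_telescope (fun t => step t v) (leqnn T)).
  by apply/eqP; rewrite b2q_eq1 /forcing_x CT inE.
split.
  by move=> t u v _ _; rewrite b2q_le; apply/implyP => /forcing_y_can_force /and4P [].
split.
  move=> t u v w _ _ uw wv; rewrite b2q_le; apply/implyP => /forcing_y_can_force.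
  by rewrite can_forceE => /and4P [_ _ _ /subsetP]; apply; rewrite !inE wv uw.
split; first exact: step.
split; first by move=> [|t] u v // _ uv; rewrite inflow_forcing; apply: forcing_constraint5.
by split=> t /andP [/growth []].
Qed.

Lemma forcing_objective : tsm_objective T forcing_x forcing_z = (#|C| + zf_rounds e T C)%:R.
Proof. by rewrite /tsm_objective natrD natr_sum sum_b2q_card. Qed.

End ForcingSolution.

Section FeasibleSolution.
Variables (V : finType) (e : rel V) (T : nat)
  (x : nat -> V -> bool) (y : nat -> V -> V -> bool) (z : nat -> bool).
Hypothesis feas : tsm_feasible e T x y z.
Let C := [set v | x 0%N v].

Lemma feasible_x_step t (X : {set V}) v : (t < T)%N -> (forall w, x t w = (w \in X)) ->
  x t.+1 v = (v \in zf_step e X).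
Proof.
(* (2)-(3) make every arc used at time t+1 a legal force, and (5) makes every
   legal force fill its target. *)
have [_ [c2 [c3 [c4 [c5 _]]]]] := feas; move=> tT xX.
have tT' : (1 <= t.+1 <= T)%N by rewrite tT.
rewrite (b2q_addE (inflow_ge0 _ _ _ _) (c4 _ v tT')) zf_stepE -xX /=.
case xv: (x t v) => //=; have vX : v \notin X by rewrite -xX xv.
apply/idP/existsP => [inflow_gt0 | [u]]; rewrite ?can_forceE; last case/and4P=> uX _ uv AX.
  have [u uv yu] : exists2 u, e u v & y t.+1 u v.
    apply/exists_inP; apply: contraTT inflow_gt0 => /exists_inPn noforcer.
    by rewrite /inflow big1 ?ltxx // => u /noforcer /negbTE ->.
  exists u; rewrite can_forceE; apply/and4P; split=> //.
    by have := c2 _ u v tT' uv; rewrite b2q_le yu -xX.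
  apply/subsetP => w; rewrite !inE => /andP [wv uw].
  by have := c3 _ u v w tT' uv uw wv; rewrite b2q_le yu -xX.
have := c5 _ u v tT' uv; rewrite /= sum_nbhdD1.
under eq_bigr => w _ do rewrite xX.
rewrite sum_b2q_setI (setIidPl AX) (deg_nbhdD1 uv) !xX uX (negbTE vX) -natr1 /b2q /=.
lra.
Qed.

Lemma feasible_x_iter t v : (t <= T)%N -> x t v = (v \in zf_iter e t C).
Proof.
elim: t v => [|t IH] v tT; first by rewrite inE.
by rewrite zf_iterS; apply: feasible_x_step => // w; apply/IH/ltnW.
Qed.

Lemma feasible_covers : zf_iter e T C = setT.
Proof.
have [c1 [_ [_ [c4 _]]]] := feas; apply/setP => v.
by rewrite inE -feasible_x_iter // -[x T v]b2q_eq1 (x_telescope (fun t => c4 t v) (leqnn T)) c1.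
Qed.

Lemma feasible_z t : (1 <= t <= T)%N -> z t = (zf_iter e t C != zf_iter e t.-1 C).
Proof.
have [_ [_ [_ [_ [_ [c6 c7]]]]]] := feas; case: t => // t /andP [_ tT].
apply/(growth_constraintsP _ (zf_step_sub _ _)).
suff -> : \sum_w (b2q (w \in zf_iter e t.+1 C) - b2q (w \in zf_iter e t C)) =
          \sum_w (b2q (x t.+1 w) - b2q (x t w)) by split; [exact: c6 | exact: c7].
by apply: eq_bigr => w _; rewrite !feasible_x_iter // ltnW.
Qed.

Lemma feasible_objective : tsm_objective T x z = (#|C| + zf_rounds e T C)%:R.
Proof.
rewrite /tsm_objective natrD natr_sum -sum_b2q_card; congr (_ + _).
  by apply: eq_bigr => v _; rewrite inE.
by apply: eq_big_nat => t tT; rewrite feasible_z.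
Qed.

End FeasibleSolution.

Theorem corollary4p7 (V : finType) (e : rel V)
  (e_sym : symmetric e) (e_irr : irreflexive e)
  (x : nat -> V -> bool) (y : nat -> V -> V -> bool) (z : nat -> bool) :
  tsm_optimal e (#|V|.-1) x y z ->
  let C := [set v | x 0%N v] in
  zero_forcing_set e C /\
  (exists k : nat,
     k%:R = tsm_objective (#|V|.-1) x z /\ thC_is e C k /\ th_is e k).
Proof.
move=> [feas opt] C.
have [p Cp pT] := pt_exists (feasible_covers feas).
split; first by exists p; case: Cp.
exists (#|C| + p)%N; split; first by rewrite (feasible_objective feas) (zf_rounds_pt Cp pT).
have thC : thC_is e C (#|C| + p) by exists p.
split=> //; split=> [|C' k' [p' [C'p' ->]]]; first by exists C.
have p'T := pt_le_card_pred C'p'.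
have := opt _ _ _ (forcing_feasible (pt_zf_iter_ge C'p' p'T)).
rewrite forcing_objective (zf_rounds_pt C'p' p'T).
by rewrite (feasible_objective feas) (zf_rounds_pt Cp pT) ler_nat.
Qed.
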